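(* Let $G=(g_1,\dots,g_k)\in\mathbb{N}_0^k$ be telescopic with $g_1>0$ and $c(G)=(c_2,\dots,c_k)$, and let $1\le n\le m\le k$. Suppose $g_n$ is an $\mathbb{N}_0$-linear combination of the entries $g_i$ with $1\le i\le m$, $i\ne n$. Then either $g_n$ is an $\mathbb{N}_0$-linear combination of the entries $g_i$ with $1\le i\le m-1$, $i\ne n$, or $g_n=c_mg_m$.
   Context: $G_i=(g_1,\dots,g_i)$, $d_i=\gcd(G_i)$, $c_j=d_{j-1}/d_j$; $G$ is telescopic if $c_jg_j$ is an $\mathbb{N}_0$-linear combination of $g_1,\dots,g_{j-1}$ for all $2\le j\le k$. An empty $\mathbb{N}_0$-linear combination equals $0$. *)

From mathcomp Require Import all_boot.
Set Implicit Arguments. Unset Strict Implicit. Unset Printing Implicit Defensive.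

(* The sequence G = (g_1,...,g_k) is modelled by g : nat -> nat, using the
   values g 1, ..., g k (values outside 1..k are irrelevant). *)

(* d_i = gcd(g_1,...,g_i), with d_0 = gcd of the empty tuple = 0. *)
Definition dG (g : nat -> nat) (i : nat) : nat := \big[gcdn/0]_(1 <= j < i.+1) g j.

Definition cG (g : nat -> nat) (j : nat) : nat := dG g j.-1 %/ dG g j.

Definition N0comb (g : nat -> nat) (m : nat) (P : pred nat) (x : nat) : Prop :=
  exists a : nat -> nat, x = \sum_(1 <= i < m.+1 | P i) a i * g i.

Definition telescopic (k : nat) (g : nat -> nat) : Prop :=
  forall j, 2 <= j <= k -> N0comb g j.-1 predT (cG g j * g j).

(* Since d_{m-1} divides g_n and every g_i with i < m, it divides a_m g_m, where
   a_m is the coefficient of g_m in the given representation of g_n; hence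
   c_m = d_{m-1} / gcd(d_{m-1}, g_m) divides a_m, say a_m = q c_m.  Replacing
   c_m g_m by its telescopic representation c_m g_m = b_n g_n + sum_{i<m, i<>n} b_i g_i
   gives g_n = X + q b_n g_n with X an N0-combination of the g_i, i < m, i <> n.
   Either q b_n g_n = 0, and g_n = X, or q b_n = 1 and X = 0, which forces the
   original representation to be g_n = c_m g_m. *)

From mathcomp Require Import all_boot.
From mathcomp Require Import zify.

Lemma dvdn_divn_gcd D e a : 0 < gcdn D e -> D %| a * e -> D %/ gcdn D e %| a.
Proof.
move=> gcd_gt0 D_ae.
have D_agcd : D %| a * gcdn D e by rewrite muln_gcdr dvdn_gcd dvdn_mull.
by rewrite -(dvdn_pmul2r gcd_gt0) divnK ?dvdn_gcdl.
Qed.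

Lemma sum_nat_cond_split (F : nat -> nat) n m : 1 <= n < m ->
  \sum_(1 <= i < m) F i = F n + \sum_(1 <= i < m | i != n) F i.
Proof.
move=> n_in; rewrite (bigD1_seq n) ?iota_uniq //.
by rewrite mem_index_iota.
Qed.

Lemma sum_nat_cond_recr (P : pred nat) (F : nat -> nat) m : 0 < m ->
  \sum_(1 <= i < m.+1 | P i) F i =
    \sum_(1 <= i < m | P i) F i + (if P m then F m else 0).
Proof. by move=> m_gt0; rewrite !(big_mkcond P) big_nat_recr. Qed.

Lemma eq_add_mul_self x X y : x = X + y * x -> y * x = 0 \/ X = 0 /\ y = 1.
Proof.
move=> def_x; have [yx0 | yx_gt0] := posnP (y * x); [by left | right].
have y_gt0 : 0 < y by move: yx_gt0; rewrite muln_gt0 => /andP [].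
split; nia.
Qed.

Section GcdSequence.

Variable g : nat -> nat.

Lemma dG_recr i : dG g i.+1 = gcdn (dG g i) (g i.+1).
Proof. by rewrite /dG big_nat_recr. Qed.

Lemma dG_dvd i j : 1 <= j <= i -> dG g i %| g j.
Proof.
elim: i => [|i IHi] j_in; first by lia.
rewrite dG_recr; case: (ltnP j i.+1) => j_le.
  by apply: dvdn_trans (dvdn_gcdl _ _) (IHi _); lia.
have -> : j = i.+1 by lia.
exact: dvdn_gcdr.
Qed.

Lemma dG_gt0 i : 0 < g 1 -> 0 < i -> 0 < dG g i.
Proof.
move=> g1_gt0 i_gt0; have := @dG_dvd i 1 (ltac:(lia)).
by case: (dG g i) => //; rewrite dvd0n => /eqP; lia.
Qed.

Lemma dG_dvd_sum (P : pred nat) (a : nat -> nat) i :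
  dG g i %| \sum_(1 <= j < i.+1 | P j) a j * g j.
Proof.
rewrite big_seq_cond; apply: dvdn_sum => j /andP [j_in _].
by apply/dvdn_mull/dG_dvd; move: j_in; rewrite mem_index_iota; lia.
Qed.

Lemma cG_dvd_coef m x : 0 < g 1 -> 0 < m ->
  dG g m.-1 %| x * g m -> cG g m %| x.
Proof.
case: m => // m g1_gt0 _ dvd_xgm.
rewrite /cG dG_recr; apply: dvdn_divn_gcd => //.
by rewrite -dG_recr dG_gt0.
Qed.

End GcdSequence.

Theorem mainTheorem19 (k : nat) (g : nat -> nat) (n m : nat) :
  telescopic k g -> 0 < g 1 ->
  1 <= n -> n <= m -> m <= k ->
  N0comb g m (fun i => i != n) (g n) ->
  N0comb g m.-1 (fun i => i != n) (g n) \/ g n = cG g m * g m.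
Proof.
move=> tel g1_gt0 n_ge1 n_le_m m_le_k [a def_gn].
have m_eq : m.-1.+1 = m by lia.
rewrite /N0comb m_eq.
have [n_lt_m | m_le_n] := ltnP n m; last first.
  have n_eq : n = m by lia.
  subst n; left; exists a.
  by rewrite def_gn sum_nat_cond_recr ?eqxx ?addn0.
pose S x := \sum_(1 <= i < m | i != n) x i * g i.
have def_gn_S : g n = S a + a m * g m.
  by rewrite def_gn sum_nat_cond_recr ?(gtn_eqF n_lt_m) //; lia.
have [b] := tel m (ltac:(lia)); rewrite m_eq => def_cgm.
have {}def_cgm : cG g m * g m = b n * g n + S b.
  by rewrite def_cgm (sum_nat_cond_split (fun i => b i * g i) n) //; lia.
have /dvdnP [q def_am] : cG g m %| a m.
  apply: cG_dvd_coef => //; first by lia.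
  have dvd_gn : dG g m.-1 %| g n by apply: dG_dvd; lia.
  have dvd_Sa : dG g m.-1 %| S a.
    by have := dG_dvd_sum g (predC1 n) a m.-1; rewrite m_eq.
  by rewrite def_gn_S dvdn_addr in dvd_gn.
have sum_aqb : S (fun i => a i + q * b i) = S a + q * S b.
  by rewrite /S big_distrr -big_split; apply: eq_bigr => i _ /=; rewrite mulnDl mulnA.
have gn_eq : g n = (S a + q * S b) + q * b n * g n.
  by rewrite {1}def_gn_S def_am -mulnA def_cgm; lia.
move/eq_add_mul_self: gn_eq => [qbgn0 | [Sqb0 qbn1]].
- left; exists (fun i => a i + q * b i).
  by rewrite -/(S _) sum_aqb; lia.
- right; have q1 : q = 1 by apply/eqP; move: qbn1 => /eqP; rewrite muln_eq1 => /andP [].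
  by rewrite def_gn_S def_am q1; lia.
Qed.
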